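(* Every graph of pathwidth at most $p$ is $p^2$-almost equitably $(p+1)$-colorable.
   Context: A $k$-coloring is equitable if its $k$ color classes (stable sets) have sizes pairwise differing by at most one. A graph $G$ is $q$-almost equitably $k$-colorable if there is a set $X$ of at most $q$ vertices such that $G\setminus X$ has an equitable $k$-coloring. *)

From mathcomp Require Import all_boot.
Set Implicit Arguments. Unset Strict Implicit. Unset Printing Implicit Defensive.

Definition simple_graph (T : finType) (e : rel T) : Prop :=
  symmetric e /\ irreflexive e.

Definition path_decomposition (T : finType) (e : rel T) (P : seq {set T}) : Prop :=
  [/\ forall v : T, exists2 B, B \in P & v \in B,
      forall u v : T, e u v -> exists2 B, B \in P & (u \in B) && (v \in B)
    & forall (v : T) (i j l : nat), i <= l -> l <= j -> j < size P ->
        v \in nth set0 P i -> v \in nth set0 P j -> v \in nth set0 P l].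

(* Width of a decomposition = max bag size - 1; so width <= p iff all bags
   have at most p+1 vertices. *)
Definition pathwidth_at_most (T : finType) (e : rel T) (p : nat) : Prop :=
  exists P : seq {set T}, path_decomposition e P /\ forall B, B \in P -> #|B| <= p.+1.

(* c is a proper k-coloring of G \ X (the subgraph induced on V \ X). *)
Definition proper_coloring_minus (T : finType) (e : rel T) (X : {set T}) (k : nat)
  (c : T -> 'I_k) : Prop :=
  forall u v : T, u \notin X -> v \notin X -> e u v -> c u != c v.

Definition color_class (T : finType) (X : {set T}) (k : nat) (c : T -> 'I_k) (i : 'I_k)
  : {set T} := [set x | (x \notin X) && (c x == i)].

Definition equitably_colorable_minus (T : finType) (e : rel T) (X : {set T}) (k : nat)
  : Prop :=
  exists c : T -> 'I_k, proper_coloring_minus e X c /\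
    forall i j : 'I_k, #|color_class X c i| <= #|color_class X c j| + 1.

Definition almost_equitably_colorable (T : finType) (e : rel T) (q k : nat) : Prop :=
  exists X : {set T}, #|X| <= q /\ equitably_colorable_minus e X k.

From mathcomp Require Import all_boot perm zify.
Set Implicit Arguments. Unset Strict Implicit. Unset Printing Implicit Defensive.

(* Sharing a bag is a relation containing the edges, so it suffices to color
   this conflict relation. Ordering the vertices by their first bag, every
   vertex conflicts with at most p earlier ones, all lying in its first bag, so
   greedy coloring uses p + 1 colors. Two classes a and b are rebalanced by
   swapping a and b on all vertices from a threshold y on: the only new
   conflicts involve vertices before y colored a or b that share a bag with a
   vertex after y; these all lie in the first bag of the first vertex after y,
   so at most min(2, p) of them have to be deleted. As y runs through the
   order, the size of class a moves by steps of one from |b| to |a|, so it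
   takes every value in between. Fixing the classes one at a time, with exactly
   min(2, p) deletions each, gives an equitable coloring after deleting
   min(2, p) * p <= p^2 vertices. *)

Lemma nat_ivt (f : nat -> nat) K t :
  (forall y, y < K -> f y.+1 <= (f y).+1 /\ f y <= (f y.+1).+1) ->
  f 0 <= t <= f K -> exists y, f y = t.
Proof.
elim: K => [|K IHK] steps /andP [f0_t t_fK]; first by exists 0; apply/eqP; rewrite eqn_leq f0_t.
have [t_fK'|fK_t] := leqP t (f K).
  by apply: IHK; [move=> y lt_yK; apply: steps; apply: ltnW | rewrite f0_t].
by exists K.+1; have [+ _] := steps K (ltnSn K); lia.
Qed.

Lemma exists_ge_average (I : finType) (A : {set I}) (f : I -> nat) t :
  0 < #|A| -> t * #|A| <= \sum_(i in A) f i -> exists2 i, i \in A & t <= f i.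
Proof.
move=> A_gt0 le_sum; apply/exists_inP; apply: contraLR le_sum => /exists_inPn lt_t.
have : \sum_(i in A) (f i + 1) <= \sum_(i in A) t.
  by apply: leq_sum => i /lt_t; rewrite addn1 ltnNge.
rewrite big_split sum1_card sum_nat_const /=; lia.
Qed.

Lemma exists_le_average (I : finType) (A : {set I}) (f : I -> nat) t :
  \sum_(i in A) f i < t.+1 * #|A| -> exists2 i, i \in A & f i <= t.
Proof.
move=> lt_sum; apply/exists_inP; apply: contraLR lt_sum => /exists_inPn gt_t.
have : \sum_(i in A) t.+1 <= \sum_(i in A) f i.
  by apply: leq_sum => i /gt_t; rewrite ltnNge.
rewrite sum_nat_const; lia.
Qed.

(* The size [t] given to the next fixed class among [m.+2] ones: some class has
   at least [t] and some at most [t + d] elements, and after [d] deletions the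
   [m.+1] remaining classes satisfy the hypothesis again. *)
Lemma balanced_target q m d N : q * m.+2 + d * m.+1 <= N <= q.+1 * m.+2 + d * m.+1 ->
  exists2 t, q <= t <= q.+1 &
    [/\ t * m.+2 <= N, N < (t + d).+1 * m.+2
      & q * m.+1 + d * m + t + d <= N <= q.+1 * m.+1 + d * m + t + d].
Proof.
move=> range_N; have [le_N|gt_N] := leqP N (q.+1 * m.+1 + q + d * m.+1).
  by exists q; [rewrite leqnn leqnSn | split; nia].
by exists q.+1; [rewrite leqnn leqnSn | split; nia].
Qed.

Lemma exists_subset_card (T : finType) (A : {set T}) n :
  n <= #|A| -> exists2 D : {set T}, D \subset A & #|D| = n.
Proof.
case/card_geqP => s [uniq_s size_s sub_s]; exists [set x in s].
  by apply/subsetP => x; rewrite inE => /sub_s.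
by rewrite cardsE (card_uniqP uniq_s).
Qed.

Lemma exists_notin_imset (T T' : finType) (f : T -> T') (B : {set T}) :
  #|B| < #|T'| -> exists y, y \notin f @: B.
Proof.
move=> lt_B; apply/existsP; rewrite -negb_forall; apply: contraTN lt_B => /forallP im_f.
rewrite -leqNgt -cardsT; apply: leq_trans (leq_imset_card f B).
by apply/subset_leq_card/subsetP => y _; rewrite -[y \in _]negbK im_f.
Qed.

Lemma almost_equitably_colorable_sub (T : finType) (e e' : rel T) q q' k :
  subrel e e' -> q <= q' ->
  almost_equitably_colorable e' q k -> almost_equitably_colorable e q' k.
Proof.
move=> sub_e le_q [X [card_X [c [col_c bal_c]]]]; exists X; split; first exact: leq_trans le_q.
by exists c; split=> // u v uX vX /sub_e; apply: col_c.
Qed.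

Section Recoloring.
Variables (T : finType) (k : nat).
Implicit Types (X : {set T}) (c : T -> 'I_k) (U : {set 'I_k}).

Definition colored_in X c U := [set v | (v \notin X) && (c v \in U)].

Lemma colored_in1 X c j : colored_in X c [set j] = color_class X c j.
Proof. by apply/setP => v; rewrite !inE. Qed.

Lemma card_colored_in X c U : #|colored_in X c U| = \sum_(j in U) #|color_class X c j|.
Proof.
rewrite -sum1_card (partition_big c (mem U)) => [|v]; last by rewrite inE => /andP [].
apply: eq_bigr => j j_U; rewrite -sum1_card; apply: eq_bigl => v.
by rewrite !inE -andbA; case: eqP => [->|]; rewrite ?(j_U : j \in U) ?andbF.
Qed.

Lemma card_colored_inD1 X c U x : x \in U ->
  #|colored_in X c U| = #|colored_in X c (U :\ x)| + #|color_class X c x|.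
Proof. by move=> x_U; rewrite !card_colored_in (big_setD1 x x_U) addnC. Qed.

(* The invariant of the balancing process: only vertices colored in [U] are
   deleted or recolored, and only with colors in [U], so the classes of the
   other colors stay frozen. *)
Definition recolor U X c X' c' :=
  [/\ X \subset X', {in X' :\: X, forall v, c v \in U}
    & {in ~: X', forall v, if c v \in U then c' v \in U else c' v == c v}].

Lemma recolor_refl U X c : recolor U X c X c.
Proof. by split=> // v; [rewrite setDv inE | case: ifP]. Qed.

Lemma recolor_trans U X1 c1 X2 c2 X3 c3 :
  recolor U X1 c1 X2 c2 -> recolor U X2 c2 X3 c3 -> recolor U X1 c1 X3 c3.
Proof.
move=> [sX12 del12 col12] [sX23 del23 col23]; split; first exact: subset_trans sX23.
  move=> v /setDP [v_X3 v_X1]; have [v_X2|v_X2] := boolP (v \in X2).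
    by apply: del12; apply/setDP.
  have := col12 v; rewrite inE v_X2 => /(_ isT).
  case: ifP => // c1_U /eqP c21; rewrite -c1_U -c21; apply: del23; exact/setDP.
move=> v v_X3; have v_X2 : v \in ~: X2.
  by move: v_X3; rewrite !inE; apply: contra; apply: (subsetP sX23).
move: (col12 v v_X2) (col23 v v_X3); case: ifP => c1_U.
  by move=> c2_U; rewrite c2_U.
by move=> /eqP ->; rewrite c1_U.
Qed.

Lemma recolorS U U' X c X' c' : U \subset U' -> recolor U X c X' c' -> recolor U' X c X' c'.
Proof.
move=> /subsetP sUU' [sXX' del_U col_U]; split=> // [v /del_U /sUU' //|v /col_U].
case: ifP => [/sUU' c_U' /sUU' c'_U'|_ /eqP ->]; first by rewrite c_U'.
by case: ifP.
Qed.

Lemma color_class_recolor U X c X' c' j : recolor U X c X' c' -> j \notin U ->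
  color_class X' c' j = color_class X c j.
Proof.
move=> [sXX' del_U col_U] j_U; apply/setP => v; rewrite !inE.
have [v_X'|v_X'] /= := boolP (v \in X').
  have [v_X|v_X] //= := boolP (v \in X).
  by apply/esym/negbTE; apply: contraNneq j_U => <-; apply: del_U; apply/setDP.
have v_X : v \notin X by apply: contra v_X' => /(subsetP sXX').
rewrite v_X; move: (col_U v); rewrite inE => /(_ v_X').
case: ifP => [c_U c'_U|_ /eqP -> //].
by rewrite !(negbTE (memPn j_U _ _)).
Qed.

Lemma card_recolor U X c X' c' : recolor U X c X' c' ->
  #|colored_in X' c' U| + #|X'| = #|colored_in X c U| + #|X|.
Proof.
move=> [sXX' del_U col_U].
have -> : colored_in X c U = colored_in X' c' U :|: (X' :\: X).
  apply/setP => v; rewrite !inE; have [v_X'|v_X'] /= := boolP (v \in X').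
    rewrite andbT; have [v_X|v_X] //= := boolP (v \in X).
    by apply: del_U; apply/setDP.
  have v_X : v \notin X by apply: contra v_X' => /(subsetP sXX').
  rewrite v_X andbF orbF; move: (col_U v); rewrite inE => /(_ v_X').
  by case: ifP => [_ ->|c_U /eqP ->] //; rewrite c_U.
rewrite cardsU (_ : _ :&: _ = set0) ?cards0 ?subn0 ?cardsDS //; last first.
  by apply/setP => v; rewrite !inE; case: (v \in X'); rewrite ?andbF.
by have := subset_leq_card sXX'; lia.
Qed.

Lemma recolor_delete U X c n : n <= #|colored_in X c U| ->
  exists X', recolor U X c X' c /\ #|X'| = #|X| + n.
Proof.
case/exists_subset_card => D /subsetP sD card_D; exists (X :|: D); split.
  split=> [|v|v]; [exact: subsetUl | | by case: ifP].
  by case/setDP => /setUP [-> //|/sD]; rewrite inE => /andP [_ ->].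
rewrite -card_D -cardsUI (_ : _ :&: _ = set0) ?cards0 ?addn0 //.
by apply/setP => v; rewrite !inE; apply/andP => -[v_X /sD]; rewrite inE v_X.
Qed.

End Recoloring.

Section BagOrder.
Variables (T : finType) (P : seq {set T}) (p : nat).
Hypothesis bags_cover : forall v : T, exists2 B, B \in P & v \in B.
Hypothesis bags_consecutive : forall (v : T) (i j l : nat), i <= l -> l <= j -> j < size P ->
  v \in nth set0 P i -> v \in nth set0 P j -> v \in nth set0 P l.
Hypothesis bags_small : forall B, B \in P -> #|B| <= p.+1.

Definition bag j := nth set0 P j.

Lemma card_bag j : #|bag j| <= p.+1.
Proof.
rewrite /bag; have [lt_j|ge_j] := ltnP j (size P); first exact/bags_small/mem_nth.
by rewrite nth_default // cards0.
Qed.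

Lemma bag_lt_size v j : v \in bag j -> j < size P.
Proof. by rewrite /bag; have [//|ge_j] := ltnP j (size P); rewrite nth_default ?inE. Qed.

Definition first_bag v := find (fun B : {set T} => v \in B) P.

Lemma has_bag v : has (fun B : {set T} => v \in B) P.
Proof. by have [B B_P v_B] := bags_cover v; apply/hasP; exists B. Qed.

Lemma first_bag_lt_size v : first_bag v < size P.
Proof. by rewrite /first_bag -has_find has_bag. Qed.

Lemma mem_first_bag v : v \in bag (first_bag v).
Proof. exact: (nth_find set0 (has_bag v)). Qed.

Lemma first_bag_min v j : v \in bag j -> first_bag v <= j.
Proof. by rewrite leqNgt; apply: contraL => /(before_find set0) ->. Qed.

Lemma mem_bag_between v i j : first_bag v <= i <= j -> v \in bag j -> v \in bag i.
Proof.
case/andP => le_fi le_ij v_j.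
exact: bags_consecutive le_fi le_ij (bag_lt_size v_j) (mem_first_bag v) v_j.
Qed.

Definition key v := first_bag v * #|T| + enum_rank v.

Lemma key_first_bag u w : key u <= key w -> first_bag u <= first_bag w.
Proof.
rewrite /key => le_key; rewrite leqNgt; apply/negP => lt_wu.
have : (first_bag w).+1 * #|T| <= first_bag u * #|T| by rewrite leq_mul2r lt_wu orbT.
have : enum_rank w < #|T| := ltn_ord _; rewrite mulSn; lia.
Qed.

Lemma key_inj : injective key.
Proof.
move=> u w eq_key; have eq_first : first_bag u = first_bag w.
  by apply/eqP; rewrite eqn_leq !key_first_bag ?eq_key.
by move: eq_key; rewrite /key eq_first => /addnI /val_inj /enum_rank_inj.
Qed.

Lemma key_lt v : key v < size P * #|T|.
Proof.
have : enum_rank v < #|T| := ltn_ord _.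
have : (first_bag v).+1 * #|T| <= size P * #|T| by rewrite leq_mul2r first_bag_lt_size orbT.
rewrite /key mulSn; lia.
Qed.

Definition share u w := [exists j : 'I_(size P), (u \in bag j) && (w \in bag j)].

Lemma shareP u w : reflect (exists j, u \in bag j /\ w \in bag j) (share u w).
Proof.
apply: (iffP existsP) => [[j /andP [u_j w_j]]|[j [u_j w_j]]]; first by exists j.
by exists (Ordinal (bag_lt_size u_j)); rewrite u_j.
Qed.

Lemma share_sym : symmetric share.
Proof. by move=> u w; apply/shareP/shareP => -[j [? ?]]; exists j. Qed.

Lemma mem_first_bag_share u w : key u <= key w -> share u w -> u \in bag (first_bag w).
Proof.
move=> le_uw /shareP [j [u_j w_j]]; apply: mem_bag_between u_j.
by rewrite key_first_bag // first_bag_min.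
Qed.

Definition conflict u w := (u != w) && share u w.

Lemma conflict_sym : symmetric conflict.
Proof. by move=> u w; rewrite /conflict eq_sym share_sym. Qed.

Lemma edge_conflict (e : rel T) : irreflexive e ->
  (forall u v, e u v -> exists2 B, B \in P & (u \in B) && (v \in B)) -> subrel e conflict.
Proof.
move=> e_irr e_bag u v e_uv; apply/andP; split.
  by apply: contraTneq e_uv => ->; rewrite e_irr.
have [B B_P /andP [u_B v_B]] := e_bag u v e_uv.
by apply/shareP; exists (index B P); rewrite /bag nth_index.
Qed.

Local Notation proper := (proper_coloring_minus conflict).

Lemma proper_subset k (X X' : {set T}) (c : T -> 'I_k) : X \subset X' -> proper X c -> proper X' c.
Proof.
move=> /subsetP sXX' col_c u w uX' wX'.
by apply: col_c; [apply: contra uX' | apply: contra wX']; apply: sXX'.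
Qed.

Lemma card_class_bag k (X A : {set T}) (c : T -> 'I_k) i j : proper X c -> A \subset bag j ->
  #|color_class X c i :&: A| <= 1.
Proof.
move=> col_c /subsetP sAj; apply/card_le1_eqP => u w.
rewrite !inE => /andP [/andP [uX /eqP cu] /sAj u_j] /andP [/andP [wX /eqP cw] /sAj w_j].
case: (eqVneq u w) => // neq_uw; suff : c u != c w by rewrite cu cw eqxx.
by apply: col_c => //; rewrite /conflict neq_uw; apply/shareP; exists j.
Qed.

Lemma greedy_coloring : exists c : T -> 'I_p.+1, proper set0 c.
Proof.
suff [c col_c] : exists c : T -> 'I_p.+1, proper [set v | size P * #|T| <= key v] c.
  by exists c; apply: proper_subset col_c; apply/subsetP => v; rewrite inE leqNgt key_lt.
elim: (size P * #|T|) => [|n [c col_c]]; first by exists (fun=> ord0) => u w; rewrite inE.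
have [v /eqP key_v|no_key] := pickP [pred v | key v == n]; last first.
  exists c; congr (proper _ c): col_c; apply/setP => w.
  by rewrite !inE ltn_neqAle eq_sym; move: (no_key w) => /= ->.
pose B := bag (first_bag v) :\ v.
have [col col_fresh] : exists col, col \notin c @: B.
  apply: exists_notin_imset; rewrite card_ord.
  by have := card_bag (first_bag v); rewrite (cardsD1 v) mem_first_bag.
have earlier w : w \notin [set w | n < key w] -> w != v -> key w < n.
  by rewrite inE -leqNgt leq_eqVlt -key_v => /predU1P [/key_inj ->|]; rewrite ?eqxx.
have fresh w : w \notin [set w | n < key w] -> w != v -> share w v -> c w != col.
  move=> wX w_v share_wv; apply: contraNneq col_fresh => <-; apply: imset_f.
  by rewrite !inE w_v mem_first_bag_share // key_v ltnW ?earlier.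
exists (fun w => if w == v then col else c w) => u w uX wX conflict_uw.
have [u_v|u_v] := eqVneq u v; have [w_v|w_v] := eqVneq w v.
- by move: conflict_uw; rewrite u_v w_v /conflict eqxx.
- by rewrite eq_sym fresh // share_sym -u_v; case/andP: conflict_uw.
- by rewrite fresh // -w_v; case/andP: conflict_uw.
- by apply: col_c => //; rewrite inE -ltnNge earlier.
Qed.

Section TailSwap.
Variables (X : {set T}) (c : T -> 'I_p.+1) (a b : 'I_p.+1).
Hypothesis col_c : proper X c.

Definition tail y := [set w | (w \notin X) && (y <= key w)].
Definition frontier y := [set u | [&& u \notin X, key u < y & [exists w in tail y, share u w]]].
Definition swap_conflicts y := [set u in frontier y | c u \in [set a; b]].
Definition tail_swap y v := if y <= key v then tperm a b (c v) else c v.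

Lemma frontier0 y : tail y = set0 -> frontier y = set0.
Proof.
move=> tail0; apply/setP => u; rewrite !inE; apply/and3P => -[_ _ /exists_inP [w]].
by rewrite tail0 inE.
Qed.

Lemma tail_min y : tail y != set0 ->
  exists2 w0, w0 \in tail y & {in tail y, forall w, key w0 <= key w}.
Proof. by case/set0Pn => w w_tail; case: (arg_minnP key w_tail) => w0; exists w0. Qed.

Lemma frontier_sub_first_bag y w0 : w0 \in tail y ->
  {in tail y, forall w, key w0 <= key w} -> frontier y \subset bag (first_bag w0).
Proof.
rewrite inE => /andP [_ le_y] min_w0; apply/subsetP => u.
rewrite inE => /and3P [_ lt_uy /exists_inP [w w_tail /shareP [j [u_j w_j]]]].
apply: mem_bag_between u_j; rewrite key_first_bag ?(ltnW (leq_trans lt_uy le_y)) //=.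
exact: leq_trans (key_first_bag (min_w0 w w_tail)) (first_bag_min w_j).
Qed.

Lemma frontier_bag y :
  exists j, frontier y :|: [set v | (v \notin X) && (key v == y)] \subset bag j.
Proof.
have [tail0|/tail_min [w0 w0_tail min_w0]] := eqVneq (tail y) set0.
  exists 0; rewrite frontier0 // set0U; apply/subsetP => v; rewrite inE => /andP [vX /eqP kv].
  suff : v \in tail y by rewrite tail0 inE.
  by rewrite inE vX kv leqnn.
exists (first_bag w0); rewrite subUset frontier_sub_first_bag //=.
apply/subsetP => v; rewrite inE => /andP [vX /eqP kv].
suff -> : v = w0 by apply: mem_first_bag.
have v_tail : v \in tail y by rewrite inE vX kv leqnn.
apply: key_inj; apply/eqP; rewrite eqn_leq min_w0 // kv.
by move: w0_tail; rewrite inE andbT => /andP [].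
Qed.

Lemma card_frontier y : #|frontier y| <= p.
Proof.
have [tail0|/tail_min [w0 w0_tail min_w0]] := eqVneq (tail y) set0.
  by rewrite frontier0 // cards0.
have sub : frontier y \subset bag (first_bag w0) :\ w0.
  rewrite subsetD1 frontier_sub_first_bag //= inE; apply/and3P => -[_ lt_y _].
  by move: w0_tail; rewrite inE leqNgt lt_y andbF.
apply: leq_trans (subset_leq_card sub) _.
by move: (card_bag (first_bag w0)); rewrite (cardsD1 w0) mem_first_bag.
Qed.

Lemma card_swap_conflicts y : #|swap_conflicts y| <= minn 2 p.
Proof.
rewrite leq_min (leq_trans _ (card_frontier y)) ?andbT; last first.
  by apply/subset_leq_card/subsetP => u; rewrite inE => /andP [].
have [j /subsetP sub_j] := frontier_bag y.
have sub : frontier y \subset bag j by apply/subsetP => u u_F; rewrite sub_j // inE u_F.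
have sub_ab : swap_conflicts y \subset
    (color_class X c a :&: frontier y) :|: (color_class X c b :&: frontier y).
  apply/subsetP => u; rewrite inE => /andP [u_F c_ab].
  have uX : u \notin X by move: u_F; rewrite inE => /and3P [].
  by move: c_ab; rewrite in_setU !in_setI u_F !andbT !inE uX.
have := card_class_bag a col_c sub; have := card_class_bag b col_c sub.
by have := subset_leq_card sub_ab; rewrite cardsU; lia.
Qed.

Definition head_a y := [set u | [&& u \notin X, c u == a, key u < y & u \notin frontier y]].
Definition tail_b y := [set w in tail y | c w == b].

Lemma color_class_tail_swap y :
  color_class (X :|: swap_conflicts y) (tail_swap y) a = head_a y :|: tail_b y.
Proof.
apply/setP => v; rewrite in_setU [v \in color_class _ _ _]inE in_setU negb_or.
rewrite [v \in swap_conflicts y]inE [v \in head_a y]inE [v \in tail_b y]inE inE /tail_swap.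
case: leqP => [le_yv|lt_vy]; rewrite ?andbT ?andbF ?orbF /=.
  by rewrite andbT inE le_yv andbT (canF_eq (tpermK a b)) tpermL.
rewrite [v \in tail y]inE leqNgt lt_vy andbF orbF; case: (v \notin X) => //=.
by case: eqP => [->|]; rewrite ?andbF // !inE eqxx /= !andbT.
Qed.

Lemma head_a_sub y : head_a y \subset head_a y.+1.
Proof.
apply/subsetP => u; rewrite !inE => /and4P [-> -> lt_uy u_F] /=; rewrite ltnW //=.
apply: contra u_F => /exists_inP [w]; rewrite inE => /andP [wX lt_yw] share_uw.
by rewrite lt_uy; apply/exists_inP; exists w; rewrite // inE wX ltnW.
Qed.

Lemma card_head_a y : #|head_a y.+1| <= (#|head_a y|).+1.
Proof.
have [j sub_j] := frontier_bag y.
have sub : head_a y.+1 :\: head_a y \subset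
    color_class X c a :&: (frontier y :|: [set v | (v \notin X) && (key v == y)]).
  apply/subsetP => u; rewrite inE [u \in head_a _]inE [u \in head_a _]inE ltnS.
  case/andP => /negP not_head /and4P [uX ca le_uy _].
  rewrite !in_setI !in_setU [u \in color_class _ _ _]inE [u \in [set _ | _]]inE uX ca /=.
  rewrite leq_eqVlt in le_uy; case/orP: le_uy => [/eqP ->|lt_uy]; first by rewrite eqxx orbT.
  by apply/orP; left; apply/negPn/negP => u_nF; apply: not_head; rewrite uX ca lt_uy.
have := card_class_bag a col_c sub_j; have := subset_leq_card sub.
by rewrite cardsDS ?head_a_sub //; have := subset_leq_card (head_a_sub y); lia.
Qed.

Lemma tail_b_sub y : tail_b y.+1 \subset tail_b y.
Proof. by apply/subsetP => w; rewrite !inE => /andP [/andP [-> /ltnW ->] ->]. Qed.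

Lemma card_tail_b y : #|tail_b y| <= (#|tail_b y.+1|).+1.
Proof.
have key_y w : w \in tail_b y :\: tail_b y.+1 -> key w = y.
  rewrite !inE => /andP [+ /andP [/andP [wX le_y] cb]].
  by rewrite wX cb andbT /= -leqNgt => le_y'; apply/eqP; rewrite eqn_leq le_y'.
have : #|tail_b y :\: tail_b y.+1| <= 1.
  by apply/card_le1_eqP => u w /key_y ku /key_y kw; apply: key_inj; rewrite ku kw.
by rewrite cardsDS ?tail_b_sub //; have := subset_leq_card (tail_b_sub y); lia.
Qed.

Lemma tail_swap_proper y : proper (X :|: swap_conflicts y) (tail_swap y).
Proof.
have swap_neq u w : u \notin X -> w \notin X -> conflict u w ->
    tperm a b (c u) != tperm a b (c w).
  by move=> uX wX conflict_uw; rewrite (inj_eq perm_inj) col_c.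
move=> u w; wlog le_uw : u w / key u <= key w => [hwlog uXD wXD conflict_uw|].
  have [le|/ltnW le] := leqP (key u) (key w); first exact: hwlog.
  by rewrite eq_sym hwlog // conflict_sym.
rewrite !in_setU !negb_or => /andP [uX uD] /andP [wX wD] conflict_uw.
rewrite /tail_swap; have [le_yu|lt_uy] := leqP y (key u).
  by rewrite (leq_trans le_yu le_uw) swap_neq.
have [le_yw|_] := leqP y (key w); last exact: col_c.
(* [u] lies on the frontier, so, not being deleted, it avoids the colors [a] and [b]. *)
have u_F : u \in frontier y.
  rewrite inE uX lt_uy; apply/exists_inP; exists w; first by rewrite inE wX.
  by case/andP: conflict_uw.
have /norP [ua ub] : ~~ ((c u == a) || (c u == b)).
  by move: uD; rewrite inE u_F !inE.
have fix_u : tperm a b (c u) = c u by rewrite tpermD 1?eq_sym.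
by rewrite -fix_u swap_neq.
Qed.

Lemma recolor_tail_swap y : recolor [set a; b] X c (X :|: swap_conflicts y) (tail_swap y).
Proof.
split=> [|v|v _]; first exact: subsetUl.
  by case/setDP => /setUP [-> //|]; rewrite inE => /andP [_ ->].
rewrite /tail_swap; case: (y <= key v); last by case: ifP.
by case: tpermP => [->|->|/eqP ca /eqP cb]; rewrite !inE ?eqxx ?orbT // (negbTE ca) (negbTE cb).
Qed.

Lemma tail_swap_balance t : #|color_class X c b| <= t <= #|color_class X c a| ->
  exists X' c', [/\ recolor [set a; b] X c X' c', proper X' c',
                    #|color_class X' c' a| = t & #|X'| <= #|X| + minn 2 p].
Proof.
move=> range_t; pose K := size P * #|T|.
have tail_end : tail K = set0 by apply/setP => w; rewrite !inE leqNgt key_lt andbF.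
have head0 : head_a 0 = set0 by apply/setP => u; rewrite !inE ltn0 !andbF.
have headK : head_a K = color_class X c a.
  by apply/setP => u; rewrite [u \in head_a K]inE frontier0 // !inE key_lt andbT.
have tail0 : tail_b 0 = color_class X c b by apply/setP => w; rewrite !inE andbT.
have tailK : tail_b K = set0 by apply/setP => w; rewrite inE tail_end inE.
have [y size_y] : exists y, #|head_a y| + #|tail_b y| = t.
  apply: (@nat_ivt _ K); last by rewrite head0 tail0 headK tailK !cards0 add0n addn0.
  move=> y _; have := card_head_a y; have := card_tail_b y.
  by have := subset_leq_card (head_a_sub y); have := subset_leq_card (tail_b_sub y); lia.
exists (X :|: swap_conflicts y), (tail_swap y); split.
- exact: recolor_tail_swap.
- exact: tail_swap_proper.
- rewrite color_class_tail_swap cardsU (_ : _ :&: _ = set0) ?cards0 ?subn0 //.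
  apply/setP => v; rewrite !inE; apply/andP.
  by case=> /and4P [_ _ lt_vy _] /andP [/andP [_]]; rewrite leqNgt lt_vy.
- by rewrite cardsU; have := card_swap_conflicts y; lia.
Qed.

End TailSwap.

Lemma fix_class (U : {set 'I_p.+1}) X (c : T -> 'I_p.+1) t : proper X c ->
  (exists2 a, a \in U & t <= #|color_class X c a|) ->
  (exists2 b, b \in U & #|color_class X c b| <= t + minn 2 p) ->
  exists x X' c', [/\ x \in U, recolor U X c X' c', proper X' c',
                      #|color_class X' c' x| = t & #|X'| <= #|X| + minn 2 p].
Proof.
move=> col_c [a a_U le_ta] [b b_U le_bt].
have [le_bt'|lt_tb] := leqP #|color_class X c b| t.
  have range_t : #|color_class X c b| <= t <= #|color_class X c a| by rewrite le_bt'.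
  have [X' [c' [rec col' size_a card_X']]] := tail_swap_balance col_c range_t.
  exists a, X', c'; split=> //; apply: recolorS rec.
  by apply/subsetP => j; rewrite !inE => /orP [] /eqP ->.
have [|X' [rec card_X']] := @recolor_delete _ _ [set b] X c (#|color_class X c b| - t).
  by rewrite colored_in1 leq_subr.
exists b, X', c; split=> //.
- by apply: recolorS rec; rewrite sub1set.
- by case: rec => sXX' _ _; apply: proper_subset col_c.
- by have := card_recolor rec; rewrite !colored_in1; lia.
- by rewrite card_X'; lia.
Qed.

Lemma fix_class_exact (U : {set 'I_p.+1}) X (c : T -> 'I_p.+1) t : proper X c ->
  t + minn 2 p <= #|colored_in X c U| ->
  (exists2 a, a \in U & t <= #|color_class X c a|) ->
  (exists2 b, b \in U & #|color_class X c b| <= t + minn 2 p) ->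
  exists x X' c', [/\ x \in U, recolor U X c X' c', proper X' c',
                      #|color_class X' c' x| = t & #|X'| = #|X| + minn 2 p].
Proof.
move=> col_c large ex_a ex_b.
have [x [X1 [c1 [x_U rec1 col1 size_x card_X1]]]] := fix_class col_c ex_a ex_b.
have [|X2 [rec2 card_X2]] := @recolor_delete _ _ (U :\ x) X1 c1 (#|X| + minn 2 p - #|X1|).
  by have := card_recolor rec1; rewrite (card_colored_inD1 X1 c1 x_U) size_x; lia.
exists x, X2, c1; split=> //.
- exact: recolor_trans rec1 (recolorS (subsetDl U [set x]) rec2).
- by case: rec2 => sX12 _ _; apply: proper_subset col1.
- by rewrite (color_class_recolor rec2) // !inE eqxx.
- by rewrite card_X2; lia.
Qed.

Lemma equalize_classes m (U : {set 'I_p.+1}) X (c : T -> 'I_p.+1) q :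
  #|U| = m.+1 -> proper X c ->
  q * m.+1 + minn 2 p * m <= #|colored_in X c U| <= q.+1 * m.+1 + minn 2 p * m ->
  exists X' c', [/\ recolor U X c X' c', proper X' c', #|X'| = #|X| + minn 2 p * m &
                   {in U, forall j, q <= #|color_class X' c' j| <= q.+1}].
Proof.
elim: m U X c => [|m IHm] U X c card_U col_c range_N.
  have /cards1P [j U_j] : #|U| == 1 by rewrite card_U.
  exists X, c; split; [exact: recolor_refl | done | by rewrite muln0 addn0 |].
  by move=> i; rewrite U_j inE => /eqP ->; rewrite -colored_in1 -U_j; lia.
move/balanced_target: range_N => [t range_t [avg_lb avg_ub rest]].
have {avg_lb} ex_a : exists2 a, a \in U & t <= #|color_class X c a|.
  by apply: exists_ge_average; rewrite -?card_colored_in card_U.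
have {avg_ub} ex_b : exists2 b, b \in U & #|color_class X c b| <= t + minn 2 p.
  by apply: exists_le_average; rewrite -card_colored_in card_U.
have large : t + minn 2 p <= #|colored_in X c U|.
  by case/andP: rest => + _; apply: leq_trans; rewrite -addnA leq_addl.
have [x [X1 [c1 [x_U rec1 col1 size_x card_X1]]]] := fix_class_exact col_c large ex_a ex_b.
have card_Ux : #|U :\ x| = m.+1 by move: card_U; rewrite (cardsD1 x) x_U add1n => -[].
have := card_recolor rec1; rewrite (card_colored_inD1 X1 c1 x_U) size_x => card_rest.
have [|X2 [c2 [rec2 col2 card_X2 bal2]]] := IHm (U :\ x) X1 c1 card_Ux col1; first lia.
exists X2, c2; split=> //.
- exact: recolor_trans rec1 (recolorS (subsetDl U [set x]) rec2).
- by rewrite card_X2 card_X1; lia.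
- move=> j j_U; have [->|j_x] := eqVneq j x; last by apply: bal2; rewrite !inE j_x.
  by rewrite (color_class_recolor rec2) ?size_x // !inE eqxx.
Qed.

Lemma conflict_almost_equitably_colorable :
  almost_equitably_colorable conflict (minn 2 p * p) p.+1.
Proof.
have [small_T|large_T] := ltnP #|T| (minn 2 p * p).
  exists setT; split; first by rewrite cardsT ltnW.
  exists (fun=> ord0); split=> [u v|i j]; first by rewrite inE.
  have class0 k : color_class setT (fun=> ord0 : 'I_p.+1) k = set0.
    by apply/setP => v; rewrite !inE.
  by rewrite !class0 cards0.
have [c col_c] := greedy_coloring.
have card_colors : #|[set: 'I_p.+1]| = p.+1 by rewrite cardsT card_ord.
set n := #|T| - minn 2 p * p; set q := n %/ p.+1.
have [|X [c' [_ col_c' card_X bal]]] := equalize_classes (q := q) card_colors col_c.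
  have -> : colored_in set0 c [set: 'I_p.+1] = [set: T] by apply/setP => v; rewrite !inE.
  have := leq_divM n p.+1; have := ltn_ceil n (ltn0Sn p).
  by rewrite cardsT -/q; lia.
exists X; split; first by rewrite card_X cards0.
exists c'; split=> // i j.
by have := bal i (in_setT i); have := bal j (in_setT j); lia.
Qed.

End BagOrder.

Theorem corollary1 (T : finType) (e : rel T) (p : nat) :
  simple_graph e -> pathwidth_at_most e p ->
  almost_equitably_colorable e (p ^ 2) p.+1.
Proof.
move=> [_ e_irr] [P [[bags_cover edge_bag bags_consecutive] bags_small]].
apply: almost_equitably_colorable_sub (edge_conflict e_irr edge_bag) _
  (conflict_almost_equitably_colorable bags_cover bags_consecutive bags_small).
by rewrite -mulnn leq_mul2r geq_minr orbT.
Qed.
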